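(* In the standing setup, the vector $(\partial\tilde f_0/\partial x_1,\dots,\partial\tilde f_0/\partial x_n)$ does not vanish identically on any torus orbit of $X$.
   Context: Standing setup. $\mathbf F=(f_0,\dots,f_m)$ is a generic sparse system $f_i=\sum_{\alpha\in\mathcal A_i}c_{\alpha,i}X^\alpha\in\mathbb C[X_1,\dots,X_n]$ (generic: coefficients in a nonempty Zariski open subset of $\prod_i\mathbb C^{\mathcal A_i}$) with admissible support $\mathcal A$, i.e. (1) for each $i$, $\mathbb R^n_{\ge0}$ is a cone of the inner normal fan of $\operatorname{conv}(\mathcal A_i)$; (2) each $\operatorname{conv}(\mathcal A_i)$ meets every coordinate hyperplane; (3) $\mathcal A_0$ contains a ''vector of unity'' (a standard basis vector $e_j$). $X$ is a proper normal toric variety with fan $\Sigma$ appropriate for $\mathcal A$: $\Sigma$ refines each normal fan of $\operatorname{conv}(\mathcal A_i)$, $\mathbb R^n_{\ge0}\in\Sigma$, and for generic $f_1,\dots,f_m$ the closure of $\{f_1=\dots=f_m=0\}$ in $X$ avoids $\operatorname{Sing}X$. Cox ring $S=\mathbb C[x_\rho:\rho\in\Sigma(1)]$, $x_j:=x_{e_j}$. $a_{\rho,0}=-\min\{\langle u,\rho\rangle:u\in\mathrm{Newt}(f_0)\}$ and $\tilde f_0=\sum_\alpha c_{\alpha,0}\prod_\rho x_\rho^{\langle\alpha,\rho\rangle+a_{\rho,0}}\in S$. The torus orbit $O(\sigma)$ of a cone $\sigma\in\Sigma$ corresponds, in Cox coordinates, to points with $x_\rho=0$ exactly for $\rho\subseteq\sigma$.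 *)

From HB Require Import structures.
From mathcomp Require Import all_boot all_order all_algebra.
From mathcomp Require Import finmap.
From mathcomp Require Import Rstruct.
From mathcomp Require Import complex.
From mathcomp Require Import mpoly.

Set Implicit Arguments.
Unset Strict Implicit.
Unset Printing Implicit Defensive.

Import Order.TTheory GRing.Theory Num.Theory.
Local Open Scope ring_scope.
Local Open Scope fset_scope.

Notation RR := Rdefinitions.R.
Notation CC := (complex Rdefinitions.R).

Notation expo n := {ffun 'I_n -> nat}.
Notation zvec n := {ffun 'I_n -> int}.
Notation rvec n := ('I_n -> RR).

Definition dotNR n (a : expo n) (v : rvec n) : RR := \sum_i (a i)%:R * v i.
Definition dotRR n (u v : rvec n) : RR := \sum_i u i * v i.
Definition dotNZ n (a : expo n) (r : zvec n) : int := \sum_i (a i)%:Z * r i.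
Definition zreal n (r : zvec n) : rvec n := fun i => (r i)%:~R.
Definition unitN n (j : 'I_n) : expo n := [ffun i => nat_of_bool (i == j)].
Definition unitZ n (j : 'I_n) : zvec n := [ffun i => (nat_of_bool (i == j))%:Z].

(* Polyhedral cones and fans.  A fan Sigma in R^n is given by its rays  *)
(* ray : 'I_k -> Z^n (the primitive generators of the elements of      *)
(* Sigma(1)) and a list of cones, each cone being given by the set of   *)
(* (indices of) rays generating it.                                     *)

Definition cone n k (ray : 'I_k -> zvec n) (S : {set 'I_k}) (v : rvec n) : Prop :=
  exists lam : 'I_k -> RR, (forall r, 0 <= lam r) /\
    forall i, v i = \sum_(r in S) lam r * zreal (ray r) i.

Definition is_face n (C F : rvec n -> Prop) : Prop :=
  exists w : rvec n, (forall v, C v -> 0 <= dotRR w v) /\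
    (forall v, F v <-> (C v /\ dotRR w v = 0)).

Definition primitive n (r : zvec n) : Prop :=
  forall d : nat, (forall i, (d%:Z %| r i)%Z) -> d = 1%N.

Definition complete_fan n k (ray : 'I_k -> zvec n) (Sigma : seq {set 'I_k}) : Prop :=
  (forall r, primitive (ray r)) /\
  injective ray /\
  (* Sigma(1) consists exactly of the rays cone(ray r) *)
  (forall r, [set r] \in Sigma) /\
  (forall s, s \in Sigma -> forall v, cone ray s v -> cone ray s (fun i => - v i) ->
       forall i, v i = 0) /\
  (forall s, s \in Sigma -> forall F, is_face (cone ray s) F ->
       exists2 t, t \in Sigma & forall v, F v <-> cone ray t v) /\
  (forall s t, s \in Sigma -> t \in Sigma ->
       is_face (cone ray s) (fun v => cone ray s v /\ cone ray t v) /\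
       is_face (cone ray t) (fun v => cone ray s v /\ cone ray t v)) /\
  (forall v : rvec n, exists2 s, s \in Sigma & cone ray s v).

(* Inner normal fan of conv(A), A a finite nonempty subset of N^n.     *)
(* The face of conv(A) on which w attains its minimum is               *)
(* conv(faceA A w); the cone of the inner normal fan associated with    *)
(* that face is { v | faceA A w is contained in faceA A v }.            *)
Definition faceA n (A : {fset expo n}) (w : rvec n) (a : expo n) : Prop :=
  a \in A /\ forall b, b \in A -> dotNR a w <= dotNR b w.

Definition normal_cone n (A : {fset expo n}) (w : rvec n) (v : rvec n) : Prop :=
  forall a, faceA A w a -> faceA A v a.

Definition is_normal_fan_cone n (A : {fset expo n}) (C : rvec n -> Prop) : Prop :=
  exists w, forall v, C v <-> normal_cone A w v.

Definition orthant n (v : rvec n) : Prop := forall i, 0 <= v i.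

Definition refines_normal_fan n k (ray : 'I_k -> zvec n) (Sigma : seq {set 'I_k})
    (A : {fset expo n}) : Prop :=
  forall s, s \in Sigma -> exists w, forall v, cone ray s v -> normal_cone A w v.

Definition meets_coord_hyperplanes n (A : {fset expo n}) : Prop :=
  forall j : 'I_n, exists lam : expo n -> RR,
    [/\ forall a, 0 <= lam a, \sum_(a <- A) lam a = 1
      & \sum_(a <- A) lam a * (a j)%:R = 0].

Definition admissible n m (A : 'I_m.+1 -> {fset expo n}) : Prop :=
  [/\ forall i, is_normal_fan_cone (A i) (@orthant n),
      forall i, meets_coord_hyperplanes (A i)
    & exists j : 'I_n, unitN j \in A ord0].

Definition appropriate_fan n m k (A : 'I_m.+1 -> {fset expo n})
    (ray : 'I_k -> zvec n) (Sigma : seq {set 'I_k}) : Prop :=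
  [/\ complete_fan ray Sigma,
      forall i, refines_normal_fan ray Sigma (A i)
    & exists2 t, t \in Sigma & forall v, cone ray t v <-> orthant v].

(* Genericity: a property holds for coefficients in a nonempty Zariski  *)
(* open subset of prod_i C^{A_i}.                                       *)
Definition coefT n m (A : 'I_m.+1 -> {fset expo n}) : finType := {i : 'I_m.+1 & A i}.

Definition zariski_open (T : finType) (U : (T -> CC) -> Prop) : Prop :=
  exists s : seq {mpoly CC[#|T|]},
    forall x, U x <-> exists2 g, g \in s & g.@[fun r => x (enum_val r)] != 0.

Definition coords n m (A : 'I_m.+1 -> {fset expo n})
    (c : 'I_m.+1 -> expo n -> CC) : coefT A -> CC :=
  fun t => c (tag t) (val (tagged t)).

Definition generic_coeffs n m (A : 'I_m.+1 -> {fset expo n})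
    (P : ('I_m.+1 -> expo n -> CC) -> Prop) : Prop :=
  exists U : (coefT A -> CC) -> Prop,
    [/\ zariski_open U, exists x, U x & forall c, U (coords c) -> P c].

Definition minZ (s : seq int) : int := foldr Order.min (head 0 s) s.

(* a_{rho,0} = - min { <u, rho> : u in Newt(f_0) }, the minimum over the
   polytope being attained on the support of f_0 *)
Definition a_rho n k (ray : 'I_k -> zvec n) (A0 : {fset expo n}) (c0 : expo n -> CC)
    (r : 'I_k) : int :=
  - minZ [seq dotNZ a (ray r) | a <- A0 & c0 a != 0].

Definition cox_exponent n k (ray : 'I_k -> zvec n) (A0 : {fset expo n})
    (c0 : expo n -> CC) (a : expo n) : 'X_{1..k} :=
  [multinom absz (dotNZ a (ray r) + a_rho ray A0 c0 r)%R | r < k].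

Definition ftilde n k (ray : 'I_k -> zvec n) (A0 : {fset expo n}) (c0 : expo n -> CC)
    : {mpoly CC[k]} :=
  \sum_(a <- A0) c0 a *: 'X_[cox_exponent ray A0 c0 a].

(* the point y (in Cox coordinates) lies in the torus orbit O(sigma):
   y_rho = 0 exactly for the rays rho contained in sigma *)
Definition in_torus_orbit n k (ray : 'I_k -> zvec n) (s : {set 'I_k}) (y : 'I_k -> CC) : Prop :=
  forall r, y r = 0 <-> cone ray s (zreal (ray r)).

From HB Require Import structures.
From mathcomp Require Import all_boot all_order all_algebra.
From mathcomp Require Import finmap.
From mathcomp Require Import Rstruct.
From mathcomp Require Import complex.
From mathcomp Require Import mpoly.
From mathcomp Require Import zify.
From Stdlib Require Import ClassicalEpsilon.

Set Implicit Arguments.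
Unset Strict Implicit.
Unset Printing Implicit Defensive.

Import Order.TTheory GRing.Theory Num.Theory.
Local Open Scope ring_scope.

(* Fix a cone s of Sigma and put y_rho = 0 for the rays rho lying in s and
   y_rho = 1 otherwise; y is a point of the orbit O(s).  At such a 0/1 point,
   d(tilde f_0)/dx_r (y) is the linear form  sum_b w_s,r(b) c_{b,0}, where the
   nonnegative integer weight w_s,r(b) vanishes unless the monomial of b has
   exponent at most [r' = r] at every ray r' of s (orbit_weight).
   The combinatorial heart (orbit_witness_exists) shows that for each s some
   ray r = e_j carries a positive weight: take the point al of A_0 minimizing a
   linear functional of the normal cone containing s; if al has a nonzero
   coordinate j, b = al works, and otherwise b = e_j (from the vector of unity)
   works, because rays of s that see the vertex 0 lie in the orthant.
   Genericity is then witnessed by one polynomial in the coefficients: the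
   product of all coefficients of f_0 (so that the exponents a_{rho,0} do not
   depend on c) and of all the nonzero weight forms. *)

Lemma dotNR_zreal n (a : expo n) (r : zvec n) : dotNR a (zreal r) = (dotNZ a r)%:~R.
Proof.
rewrite /dotNR /dotNZ /zreal rmorph_sum; apply: eq_bigr => i _.
by rewrite rmorphM /= pmulrn.
Qed.

Lemma dotNZ_unitZ n (a : expo n) j : dotNZ a (unitZ j) = (a j)%:Z.
Proof.
rewrite /dotNZ (bigD1 j) //= big1 ?addr0; first by rewrite ffunE eqxx mulr1.
by move=> i /negbTE ij; rewrite ffunE ij mulr0.
Qed.

Lemma dotNZ_unitN n (r : zvec n) j : dotNZ (unitN j) r = r j.
Proof.
rewrite /dotNZ (bigD1 j) //= big1 ?addr0; first by rewrite ffunE eqxx mul1r.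
by move=> i /negbTE ij; rewrite ffunE ij mul0r.
Qed.

Lemma dotNZ0 n (r : zvec n) : dotNZ [ffun _ => 0%N] r = 0.
Proof. by rewrite /dotNZ big1 // => i _; rewrite ffunE mul0r. Qed.

Definition ev n (j : 'I_n) : rvec n := fun i => if i == j then 1 else 0.

Lemma dotNR_ev n (a : expo n) j : dotNR a (ev j) = (a j)%:R.
Proof.
rewrite /dotNR (bigD1 j) //= big1 ?addr0; first by rewrite /ev eqxx mulr1.
by move=> i /negbTE ij; rewrite /ev ij mulr0.
Qed.

Lemma dotRR_ev n (w : rvec n) j : dotRR w (ev j) = w j.
Proof.
rewrite /dotRR (bigD1 j) //= big1 ?addr0; first by rewrite /ev eqxx mulr1.
by move=> i /negbTE ij; rewrite /ev ij mulr0.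
Qed.

Lemma orthant_ev n (j : 'I_n) : orthant (ev j).
Proof. by move=> i; rewrite /ev; case: ifP. Qed.

Lemma minZ_le (s : seq int) y : y \in s -> minZ s <= y.
Proof.
rewrite /minZ; elim: s (head 0 s) => //= a s IH x0.
by rewrite inE ge_min => /orP[/eqP->|/IH->]; rewrite ?lexx ?orbT.
Qed.

Lemma minZ_mem (s : seq int) : s != [::] -> minZ s \in s.
Proof.
case: s => // a s _; rewrite /minZ /=.
suff : foldr Order.min a s \in a :: s.
  by rewrite /Order.min inE; case: ifP => _ //; rewrite inE eqxx.
elim: s => [|b s IH] /=; first by rewrite inE.
rewrite /Order.min; case: ifP => _; first by rewrite !inE eqxx orbT.
by move: IH; rewrite !inE => /orP[->|->]; rewrite ?orbT.
Qed.

Lemma cone_self n k (ray : 'I_k -> zvec n) (t : {set 'I_k}) r :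
  r \in t -> cone ray t (zreal (ray r)).
Proof.
move=> rt; exists (fun r' => if r' == r then 1 else 0); split.
  by move=> r'; case: ifP.
move=> i; rewrite (bigD1 r) //= eqxx mul1r big1 ?addr0 //.
by move=> r' /andP[_ /negbTE ->]; rewrite mul0r.
Qed.

Lemma primitive_unit n (r : zvec n) j : primitive r -> 0 < r j ->
  (forall i, i != j -> r i = 0) -> r = unitZ j.
Proof.
move=> pr rj0 roff.
have d1 : absz (r j) = 1%N.
  apply: pr => i; case: (eqVneq i j) => [->|/roff ->]; last exact: dvdz0.
  by rewrite gez0_abs ?ltW.
apply/ffunP => i; rewrite ffunE; case: (eqVneq i j) => [->|/roff ->//].
by rewrite -(gez0_abs (ltW rj0)) d1.
Qed.

Definition coord_axis n (j : 'I_n) (v : rvec n) : Prop :=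
  orthant v /\ forall i, i != j -> v i = 0.

Lemma coord_axis_face n (C : rvec n -> Prop) j :
  (forall v, C v <-> orthant v) -> is_face C (coord_axis j).
Proof.
move=> CE; pose w : rvec n := fun i => if i == j then 0 else 1.
have wv_ge0 v i : orthant v -> 0 <= w i * v i.
  by move=> ov; rewrite /w; case: ifP => _; rewrite ?mul0r ?mul1r ?ov.
exists w; split=> [v /CE ov|v]; first by apply: sumr_ge0 => i _; exact: wv_ge0.
split=> [[ov voff]|[/CE ov wv0]].
  split; first exact/CE.
  rewrite /dotRR big1 // => i _; rewrite /w.
  by case: (eqVneq i j) => [_|/voff ->]; rewrite ?mul0r ?mulr0.
split=> // i ij.
have := psumr_eq0P (P := predT) (fun i _ => wv_ge0 v i ov) wv0 (i := i) isT.
by rewrite /w (negbTE ij) mul1r.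
Qed.

(* In a complete fan containing the orthant as a cone, the orthant's rays are
   exactly the e_j: every e_j is a ray, and any ray inside the orthant with
   positive j-th coordinate equals e_j (because it spans a common face). *)
Section FanWithOrthant.
Variables (n k : nat) (ray : 'I_k -> zvec n) (Sigma : seq {set 'I_k}).
Hypothesis fanS : complete_fan ray Sigma.
Variable t : {set 'I_k}.
Hypotheses (tS : t \in Sigma) (tE : forall v, cone ray t v <-> orthant v).

Lemma unit_vector_ray (j : 'I_n) : exists r, ray r = unitZ j.
Proof.
have [prim [_ [_ [_ [faces _]]]]] := fanS.
have [t' t'S t'E] := faces t tS _ (coord_axis_face j tE).
have axis_ray r : r \in t' -> coord_axis j (zreal (ray r)).
  by move=> rt; apply/t'E; exact: cone_self.
have [lam [_ lamE]] : cone ray t' (ev j).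
  apply/t'E; split=> [|i /negbTE ij]; first exact: orthant_ev.
  by rewrite /ev ij.
have [/existsP[r /andP[rt rj]]|] := boolP [exists r in t', ray r j != 0].
  have [ro roff] := axis_ray r rt.
  exists r; apply: primitive_unit => [//||i /roff /eqP].
  - by rewrite lt_def rj -(ler0z RR) ro.
  - by rewrite intr_eq0 => /eqP.
rewrite negb_exists => /forallP noj.
have := lamE j; rewrite /ev eqxx big1 => [/eqP|r rt]; first by rewrite oner_eq0.
by move: (noj r); rewrite rt negbK => /eqP rj; rewrite /zreal rj mulr0.
Qed.

Lemma orthant_ray_unit r j :
  orthant (zreal (ray r)) -> 0 < ray r j -> ray r = unitZ j.
Proof.
move=> ro rj; have [prim [_ [single [_ [_ [inter _]]]]]] := fanS.
have [_ [w [w0 wE]]] := inter _ _ (single r) tS.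
have wr : dotRR w (zreal (ray r)) = 0.
  by case: ((wE _).1 (conj (cone_self ray (set11 r)) ((tE _).2 ro))).
have wi i : 0 <= w i by rewrite -dotRR_ev w0 //; apply/tE/orthant_ev.
have wj : w j = 0.
  have := psumr_eq0P (P := predT) (F := fun i => w i * zreal (ray r) i)
    (fun i _ => mulr_ge0 (wi i) (ro i)) wr (i := j) isT.
  move/eqP; rewrite mulf_eq0 => /orP[/eqP //|].
  by rewrite /zreal intr_eq0 => /eqP rj0; move: rj; rewrite rj0 ltxx.
have wej : dotRR w (ev j) = 0 by rewrite dotRR_ev.
have [[lam [_ lamE]] _] := (wE (ev j)).2 (conj ((tE _).2 (orthant_ev j)) wej).
apply: primitive_unit => // i ij.
have := lamE i; rewrite /ev (negbTE ij) big_set1 => /esym/eqP; rewrite mulf_eq0.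
case/orP => [/eqP l0|]; last by rewrite /zreal intr_eq0 => /eqP.
by have := lamE j; rewrite /ev eqxx big_set1 l0 mul0r => /eqP; rewrite oner_eq0.
Qed.

End FanWithOrthant.

Lemma coord_zero n (A : {fset expo n}) : meets_coord_hyperplanes A ->
  forall j, exists2 b, b \in A & b j = 0%N.
Proof.
move=> mc j; have [lam [lam0 lam1 lamj]] := mc j.
have [/hasP[b bA /eqP bj]|/hasPn noz] := boolP (has (fun b : expo n => b j == 0%N) A).
  by exists b.
have : \sum_(a <- A) lam a <= \sum_(a <- A) lam a * (a j)%:R.
  rewrite big_seq [leRHS]big_seq; apply: ler_sum => a aA.
  by rewrite -[leLHS]mulr1 ler_wpM2l // ler1n lt0n noz.
by rewrite lam1 lamj ler10.
Qed.

Lemma zero_face_orthant n (A : {fset expo n}) v :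
  is_normal_fan_cone A (@orthant n) -> meets_coord_hyperplanes A ->
  faceA A v [ffun _ => 0%N] -> orthant v.
Proof.
move=> [w wE] mc f0; apply/wE => a fa; suff -> : a = [ffun _ => 0%N] by [].
apply/ffunP => i; rewrite ffunE.
have [b bA bi] := coord_zero mc i.
have [_ amin] := (wE (ev i)).1 (orthant_ev i) a fa.
by have := amin b bA; rewrite !dotNR_ev bi ler_nat leqn0 => /eqP.
Qed.

Definition minDot n (A : {fset expo n}) (rho : zvec n) : int :=
  minZ [seq dotNZ a rho | a <- A].

Lemma minDot_le n (A : {fset expo n}) rho b : b \in A -> minDot A rho <= dotNZ b rho.
Proof. by move=> bA; apply/minZ_le/map_f. Qed.

Lemma minDot_face n (A : {fset expo n}) (rho : zvec n) b :
  faceA A (zreal rho) b -> minDot A rho = dotNZ b rho.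
Proof.
move=> [bA bmin]; apply/eqP; rewrite eq_le minDot_le //=.
have /mapP[a aA ->] : minDot A rho \in [seq dotNZ a rho | a <- A].
  by apply/minZ_mem/(contraTneq _ (map_f (fun a => dotNZ a rho) bA)) => ->.
by rewrite -(ler_int RR) -!dotNR_zreal bmin.
Qed.

(* The Cox exponent of a in tilde f_0 when every coefficient on A_0 is nonzero:
   its rho-entry is <a, rho> - min_(b in A_0) <b, rho>. *)
Definition supp_exponent n k (ray : 'I_k -> zvec n) (A0 : {fset expo n}) (a : expo n)
    : 'X_{1..k} :=
  [multinom absz (dotNZ a (ray r) - minDot A0 (ray r)) | r < k].

Lemma supp_exponentE n k (ray : 'I_k -> zvec n) (A0 : {fset expo n}) b r :
  b \in A0 -> (supp_exponent ray A0 b r)%:Z = dotNZ b (ray r) - minDot A0 (ray r).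
Proof. by move=> bA; rewrite mnmE gez0_abs // subr_ge0 minDot_le. Qed.

Lemma cox_exponent_supp n k (ray : 'I_k -> zvec n) (A0 : {fset expo n}) c0 :
  {in A0, forall a, c0 a != 0} -> cox_exponent ray A0 c0 =1 supp_exponent ray A0.
Proof.
move=> c0nz a; apply/mnmP => r; rewrite !mnmE /a_rho /minDot.
by rewrite (eq_in_filter (a2 := predT)) ?filter_predT.
Qed.

Lemma minDot_unitZ n (A : {fset expo n}) j :
  meets_coord_hyperplanes A -> minDot A (unitZ j) = 0.
Proof.
move=> mc; have [b bA bj] := coord_zero mc j.
rewrite (@minDot_face _ _ _ b) ?dotNZ_unitZ ?bj //; split=> // a aA.
by rewrite !dotNR_zreal !dotNZ_unitZ ler_int bj.
Qed.

(* For each cone s we find a ray r = e_j and a point b of A_0 whose monomial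
   has positive x_r-degree and degree at most [r' = r] in the other rays r'
   of s, so that its x_r-derivative survives at the 0/1 point of O(s). *)
Section TorusOrbitWitness.
Variables (n m k : nat) (A : 'I_m.+1 -> {fset expo n}).
Variables (ray : 'I_k -> zvec n) (Sigma : seq {set 'I_k}).
Hypotheses (admA : admissible A) (appS : appropriate_fan A ray Sigma).

Local Notation A0 := (A ord0).
Local Notation E := (supp_exponent ray A0).

Lemma supp_exponent_unit_ray r j b :
  ray r = unitZ j -> b \in A0 -> E b r = b j.
Proof.
have [_ mc _] := admA; move=> rj bA; apply/eqP; rewrite -eqz_nat.
by rewrite supp_exponentE // rj dotNZ_unitZ minDot_unitZ // subr0.
Qed.

Lemma supp_exponent_face s w al r :
  (forall v, cone ray s v -> normal_cone A0 w v) -> faceA A0 w al ->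
  cone ray s (zreal (ray r)) -> E al r = 0%N.
Proof.
move=> sw fal /sw /(_ al fal) fr; apply/eqP; rewrite -eqz_nat.
by rewrite supp_exponentE ?(minDot_face fr) ?subrr //; case: fal.
Qed.

Definition orbit_witness (s : {set 'I_k}) (r : 'I_k) (b : expo n) : Prop :=
  (0 < E b r)%N /\
  forall r', cone ray s (zreal (ray r')) -> (E b r' <= (r' == r))%N.

Lemma witness_nonzero_face s w al j :
  (forall v, cone ray s v -> normal_cone A0 w v) -> faceA A0 w al -> al j != 0%N ->
  exists r, ray r = unitZ j /\ orbit_witness s r al.
Proof.
have [cfS _ [t tS tE]] := appS; have [r rj] := unit_vector_ray cfS tS tE j.
move=> sw fal alj; exists r; split=> //; split.
  by rewrite (supp_exponent_unit_ray rj) ?lt0n //; case: fal.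
by move=> r' /(supp_exponent_face sw fal) ->.
Qed.

(* Second case: the minimizing point is 0; then the vector of unity e_j
   works, since the rays of s lie in the orthant and only e_j itself has
   positive j-th coordinate. *)
Lemma witness_zero_face s w j :
  (forall v, cone ray s v -> normal_cone A0 w v) -> faceA A0 w [ffun _ => 0%N] ->
  unitN j \in A0 -> exists r, ray r = unitZ j /\ orbit_witness s r (unitN j).
Proof.
have [cfS _ [t tS tE]] := appS; have [nfc mc _] := admA.
have [r rj] := unit_vector_ray cfS tS tE j.
move=> sw f0 ejA; exists r; split=> //; split.
  by rewrite (supp_exponent_unit_ray rj) // ffunE eqxx.
move=> r' /sw /(_ _ f0) f0r'.
have ro := zero_face_orthant (nfc ord0) (mc ord0) f0r'.
have := supp_exponentE ray r' ejA.
rewrite dotNZ_unitN (minDot_face f0r') dotNZ0 subr0.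
have [rpos|rnpos] := ltrP 0 (ray r' j).
  have := orthant_ray_unit cfS tS tE ro rpos; rewrite -rj => /(proj1 (proj2 cfS)) ->.
  by rewrite rj ffunE eqxx eqxx /=; lia.
by move=> Er'; move: rnpos; rewrite -Er'; lia.
Qed.

(* Take a point of A_0 minimizing a functional w whose normal cone contains s,
   and split on whether it is the origin. *)
Lemma orbit_witness_exists s : s \in Sigma ->
  exists j r, ray r = unitZ j /\ exists2 b, b \in A0 & orbit_witness s r b.
Proof.
have [_ refS _] := appS; have [_ _ [j0 ej0A]] := admA.
move=> sS; have [w sw] := refS ord0 s sS.
have [a0 _ a0min] :=
  arg_minP (i0 := (FSetSub ej0A)) (P := predT) (fun a : A0 => dotNR (val a) w) isT.
have fal : faceA A0 w (val a0).
  by split=> [|b bA]; [exact: fsvalP | exact: (a0min (FSetSub bA))].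
have [/existsP[j alj]|] := boolP [exists j, val a0 j != 0%N].
  have [r [rj wit]] := witness_nonzero_face sw fal alj.
  by exists j, r; split=> //; exists (val a0) => //; exact: fsvalP.
rewrite negb_exists => /forallP al0.
have al0E : val a0 = [ffun _ => 0%N].
  by apply/ffunP => i; rewrite ffunE; apply/eqP/negPn/al0.
rewrite al0E in fal; have [r [rj wit]] := witness_zero_face sw fal ej0A.
by exists j0, r; split=> //; exists (unitN j0).
Qed.

End TorusOrbitWitness.

(* The coefficient of c_{a,0} in d(tilde f_0)/dx_r at a 0/1 point with
   zero set Z. *)
Definition orbit_weight n k (ray : 'I_k -> zvec n) (A0 : {fset expo n})
    (Z : {set 'I_k}) (r : 'I_k) (a : expo n) : nat :=
  supp_exponent ray A0 a r *
    [forall r' in Z, (supp_exponent ray A0 a r' <= (r' == r))%N].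

Lemma meval_monomial_01 k (y : 'I_k -> CC) (mm : 'X_{1..k}) r :
  (forall i, y i = 0 \/ y i = 1) ->
  \prod_(i < k) y i ^+ (mm - U_(r))%MM i =
    ([forall r' in [set i | y i == 0], (mm r' <= (r' == r))%N])%:R.
Proof.
move=> y01; case: (boolP [forall _ in _, _]) => [allZ|].
  rewrite big1 // => i _; rewrite mnmBE mnm1E.
  have [yi|yi] := y01 i; last by rewrite yi expr1n.
  move: (forallP allZ i); rewrite inE yi eqxx /= eq_sym => le1.
  by rewrite (_ : (_ - _)%N = 0%N) ?expr0 //; apply/eqP; rewrite subn_eq0.
rewrite negb_forall; case/existsP => i; rewrite negb_imply inE => /andP[/eqP yi gt1].
rewrite (bigD1 i) //= mnmBE mnm1E yi expr0n /=.
by move: gt1; rewrite -ltnNge -subn_gt0 eq_sym => /gtn_eqF ->; rewrite mul0r.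
Qed.

Lemma meval_deriv_ftilde_01 n k (ray : 'I_k -> zvec n) (A0 : {fset expo n})
    (c0 : expo n -> CC) (y : 'I_k -> CC) r :
  {in A0, forall a, c0 a != 0} -> (forall i, y i = 0 \/ y i = 1) ->
  (mderiv r (ftilde ray A0 c0)).@[y] =
    \sum_(b : A0) (orbit_weight ray A0 [set i | y i == 0] r (val b))%:R * c0 (val b).
Proof.
move=> c0nz y01; rewrite /ftilde big_seq_fsetE /=.
rewrite (big_morph (mderiv r) (mderivD r) (mderiv0 _ r)).
rewrite (big_morph (meval y) (mevalD y) (meval0 y)).
apply: eq_bigr => b _; rewrite mderivZ mderivX mevalZ mevalZ mevalX.
by rewrite (cox_exponent_supp ray c0nz) meval_monomial_01 // natrM mulrC.
Qed.

Lemma meval_prod (R : comNzRingType) k (I : finType) (P : {pred I})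
    (F : I -> {mpoly R[k]}) v :
  (\prod_(i | P i) F i).@[v] = \prod_(i | P i) (F i).@[v].
Proof. exact: (big_morph (meval v) (mevalM v) (meval1 v)). Qed.

Section GenericityPolynomial.
Variables (n m k : nat) (A : 'I_m.+1 -> {fset expo n}) (ray : 'I_k -> zvec n).

Local Notation A0 := (A ord0).
Local Notation coefR := {mpoly CC[#|coefT A|]}.
Local Notation at_point x := (fun i => x (enum_val i)).
Local Notation weight Z r b := (orbit_weight ray A0 Z r (val b)).

Definition coef_var (b : A0) : coefR :=
  'X_(enum_rank (Tagged (fun i => A i) b : coefT A)).

Definition weight_form (Z : {set 'I_k}) (r : 'I_k) : coefR :=
  \sum_(b : A0) (weight Z r b)%:R *: coef_var b.

(* Only the forms with a positive total weight (hence not identically zero)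
   are multiplied in. *)
Definition genericity_poly : coefR :=
  (\prod_(b : A0) coef_var b) *
  \prod_(Z : {set 'I_k}) \prod_(r : 'I_k | (0 < \sum_(b : A0) weight Z r b)%N)
    weight_form Z r.

Lemma meval_coef_var (x : coefT A -> CC) b :
  (coef_var b).@[at_point x] = x (Tagged (fun i => A i) b).
Proof. by rewrite /coef_var mevalXU enum_rankK. Qed.

Lemma meval_weight_form (x : coefT A -> CC) Z r :
  (weight_form Z r).@[at_point x] =
    \sum_(b : A0) (weight Z r b)%:R * x (Tagged (fun i => A i) b).
Proof.
rewrite /weight_form (big_morph (meval _) (mevalD _) (meval0 _)).
by apply: eq_bigr => b _; rewrite mevalZ meval_coef_var.
Qed.

(* The set is nonempty: all weights are nonnegative, so at c = 1 every
   nonzero weight form is positive. *)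
Lemma genericity_poly_ones : genericity_poly.@[at_point (fun _ => 1)] != 0.
Proof.
rewrite mevalM !meval_prod mulf_neq0 //.
  by apply/prodf_neq0 => b _; rewrite (meval_coef_var (fun _ => 1)) oner_neq0.
apply/prodf_neq0 => Z _; rewrite meval_prod; apply/prodf_neq0 => r pos.
rewrite (meval_weight_form (fun _ => 1)); under eq_bigr do rewrite mulr1.
by rewrite -natr_sum pnatr_eq0 -lt0n.
Qed.

Lemma genericity_poly_coeffs (c : 'I_m.+1 -> expo n -> CC) :
  genericity_poly.@[at_point (coords c)] != 0 ->
  {in A0, forall a, c ord0 a != 0} /\
  forall Z r, (0 < \sum_(b : A0) weight Z r b)%N ->
    \sum_(b : A0) (weight Z r b)%:R * c ord0 (val b) != 0.
Proof.
rewrite mevalM mulf_eq0 negb_or !meval_prod => /andP[/prodf_neq0 nzX /prodf_neq0 nzL].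
split=> [a aA|Z r pos]; first by have := nzX (FSetSub aA) isT; rewrite meval_coef_var.
have := nzL Z isT; rewrite meval_prod => /prodf_neq0 /(_ r pos).
by rewrite meval_weight_form.
Qed.

End GenericityPolynomial.

Definition orbit_point n k (ray : 'I_k -> zvec n) (s : {set 'I_k}) (r : 'I_k) : CC :=
  if excluded_middle_informative (cone ray s (zreal (ray r))) then 0 else 1.

Lemma orbit_point_01 n k (ray : 'I_k -> zvec n) s i :
  orbit_point ray s i = 0 \/ orbit_point ray s i = 1.
Proof. by rewrite /orbit_point; case: excluded_middle_informative; [left|right]. Qed.

Lemma orbit_point_in_orbit n k (ray : 'I_k -> zvec n) s :
  in_torus_orbit ray s (orbit_point ray s).
Proof.
move=> r; rewrite /orbit_point.
by case: excluded_middle_informative => h; split=> // /eqP; rewrite oner_eq0.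
Qed.

Theorem mainTheorem16 (n m : nat) (A : 'I_m.+1 -> {fset expo n})
    (k : nat) (ray : 'I_k -> zvec n) (Sigma : seq {set 'I_k}) :
  admissible A ->
  appropriate_fan A ray Sigma ->
  generic_coeffs A (fun c : 'I_m.+1 -> expo n -> CC =>
    forall s, s \in Sigma ->
      exists y : 'I_k -> CC, in_torus_orbit ray s y /\
        exists (j : 'I_n) (r : 'I_k), ray r = unitZ j /\
          (mderiv r (ftilde ray (A ord0) (c ord0))).@[y] != 0).
Proof.
move=> admA appS; set G := genericity_poly A ray.
exists (fun x => exists2 g, g \in [:: G] & g.@[fun i => x (enum_val i)] != 0).
split; [by exists [:: G] | by exists (fun _ => 1), G; rewrite ?inE ?genericity_poly_ones |].
move=> c [_ /[!inE] /eqP-> /genericity_poly_coeffs [c0nz nzL]] s sS.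
have [j [r [rj [b bA [Eb Eall]]]]] := orbit_witness_exists admA appS sS.
exists (orbit_point ray s); split; first exact: orbit_point_in_orbit.
exists j, r; split=> //; rewrite meval_deriv_ftilde_01 //; last exact: orbit_point_01.
apply: nzL; rewrite (bigD1 (FSetSub bA)) //= ltn_addr // muln_gt0 Eb lt0b.
apply/forallP => r'; apply/implyP; rewrite inE => /eqP /orbit_point_in_orbit.
exact: Eall.
Qed.
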